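(* Let $\mathcal{H}$ be a Hilbert space of dimension $d\ge 3$ with a fixed orthonormal basis, and for an operator $U$ let $U^*$ denote its entrywise complex conjugate in that basis. Then there is no triple $(\epsilon,\mathcal{E},\mathcal{D})$ consisting of a number $\epsilon>0$, a finite-dimensional ancillary Hilbert space $\mathcal{H}_A$, and completely positive trace non-increasing maps $\mathcal{E}:\mathcal{B}(\mathcal{H})\to\mathcal{B}(\mathcal{H}\otimes\mathcal{H}_A)$ and $\mathcal{D}:\mathcal{B}(\mathcal{H}\otimes\mathcal{H}_A)\to\mathcal{B}(\mathcal{H})$ such that for every unitary $U$ on $\mathcal{H}$ and every density operator $\rho$ on $\mathcal{H}$, $$0<\epsilon\le\operatorname{tr}\big[\mathcal{D}\circ(\mathcal{U}_U\otimes\mathrm{id}_{\mathcal{H}_A})\circ\mathcal{E}(\rho)\big]\quad\text{and}\quad \mathcal{D}\circ(\mathcal{U}_U\otimes\mathrm{id}_{\mathcal{H}_A})\circ\mathcal{E}(\rho)\propto U^*\rho\,U^{*\dagger},$$ where $\mathcal{U}_U(X)=UXU^\dagger$ acts on the $\mathcal{H}$ factor. *)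

(* complex numbers R[i] over a realType R (mathcomp-real-closed),
   operators as square matrices in the fixed orthonormal (standard) basis,
   Kronecker product [*t] from real_closed.mxtens (index (i,j) |-> i*n+j). *)
From HB Require Import structures.
From mathcomp Require Import all_boot all_order all_algebra.
From mathcomp Require Export reals complex mxtens spectral.
Set Implicit Arguments.
Unset Strict Implicit.
Unset Printing Implicit Defensive.
Import Order.TTheory GRing.Theory Num.Theory.
Local Open Scope ring_scope.

Section QuantumDefs.
Variable C : numClosedFieldType.

Definition entryconj m n (A : 'M[C]_(m, n)) : 'M[C]_(m, n) := map_mx Num.conj A.

Definition adjmx m n (A : 'M[C]_(m, n)) : 'M[C]_(n, m) := (entryconj A)^T.

Definition psdmx n (A : 'M[C]_n) : Prop :=
  forall v : 'cV[C]_n, 0 <= (adjmx v *m A *m v) 0 0.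

Definition density n (rho : 'M[C]_n) : Prop := psdmx rho /\ \tr rho = 1.

(* unitarity: the library's [U \is unitarymx] (spectral.v), U U^dagger = 1 *)

Definition blockmx k n (X : 'M[C]_(k * n)) (i j : 'I_k) : 'M[C]_n :=
  \matrix_(a, b) X (mxtens_index (i, a)) (mxtens_index (j, b)).

(* id_k (x) E applied to X = sum_{ij} E_ij (x) X_ij *)
Definition ampliate k n m (E : 'M[C]_n -> 'M[C]_m) (X : 'M[C]_(k * n))
  : 'M[C]_(k * m) :=
  \sum_(i < k) \sum_(j < k) (delta_mx i j *t E (blockmx X i j)).

Definition completely_positive n m (E : 'M[C]_n -> 'M[C]_m) : Prop :=
  forall k (X : 'M[C]_(k * n)), psdmx X -> psdmx (ampliate E X).

Definition trace_nonincreasing n m (E : 'M[C]_n -> 'M[C]_m) : Prop :=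
  forall X : 'M[C]_n, psdmx X -> \tr (E X) <= \tr X.

Definition cptni n m (E : 'M[C]_n -> 'M[C]_m) : Prop :=
  [/\ linear E, completely_positive E & trace_nonincreasing E].

End QuantumDefs.

From HB Require Import structures.
From mathcomp Require Import all_boot all_order all_algebra.
From mathcomp Require Import reals complex mxtens spectral.
From mathcomp Require Import ring.
Import Order.TTheory GRing.Theory Num.Theory.
Local Open Scope ring_scope.
Set Implicit Arguments.
Unset Strict Implicit.
Unset Printing Implicit Defensive.

(* Feed the uniform superposition rho = |1><1| / d through the protocol and conjugate
   by diagonal unitaries U = diag(conj u) with |u_k| = 1.  With P_k = |k><k| (x) 1 and
   B_kl = D (P_k E(rho) P_l^+), the output is sum_kl conj(u_k) u_l B_kl, hence
   <y, out y> = q (y u^T) for the form q(W) = sum_kl <W_k, B_kl W_l> on d x d matrices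
   (W_k the k-th column), which is positive semidefinite because D is completely
   positive.  The output must be proportional to diag(u) rho diag(u)^+, so q vanishes on
   y u^T whenever y is orthogonal to u.  The null vectors of a positive form make up a
   subspace, and for d >= 3 these rank-one matrices span the all-ones matrix J; yet
   q(J) = c d with c >= eps > 0. *)

Section Adjoint.
Variable C : numClosedFieldType.

Lemma adjmxE m n (A : 'M[C]_(m, n)) i j : adjmx A i j = (A j i)^*.
Proof. by rewrite /adjmx /entryconj !mxE. Qed.

Lemma adjmxK m n (A : 'M[C]_(m, n)) : adjmx (adjmx A) = A.
Proof. by apply/matrixP => i j; rewrite !adjmxE conjCK. Qed.

Lemma adjmxM m n p (A : 'M[C]_(m, n)) (B : 'M[C]_(n, p)) :
  adjmx (A *m B) = adjmx B *m adjmx A.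
Proof. by rewrite /adjmx /entryconj map_mxM trmx_mul. Qed.

Lemma adjmxD m n (A B : 'M[C]_(m, n)) : adjmx (A + B) = adjmx A + adjmx B.
Proof. by apply/matrixP => i j; rewrite !(adjmxE, mxE) rmorphD. Qed.

Lemma adjmxZ m n c (A : 'M[C]_(m, n)) : adjmx (c *: A) = c^* *: adjmx A.
Proof. by apply/matrixP => i j; rewrite !(adjmxE, mxE) rmorphM. Qed.

Lemma adjmx_sum m n (I : finType) (F : I -> 'M[C]_(m, n)) :
  adjmx (\sum_i F i) = \sum_i adjmx (F i).
Proof.
apply/matrixP => i j; rewrite adjmxE !summxE rmorph_sum.
by apply: eq_bigr => k _; rewrite adjmxE.
Qed.

Lemma adjmx_trC m n (A : 'M[C]_(m, n)) : adjmx A = map_mx Num.conj A^T.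
Proof. by rewrite /adjmx /entryconj map_trmx. Qed.

Lemma adjmx_diag n (u : 'rV[C]_n) : adjmx (diag_mx u) = diag_mx (map_mx Num.conj u).
Proof.
apply/matrixP => i j; rewrite adjmxE !mxE rmorphMn eq_sym.
by have [->|] := eqVneq j i.
Qed.

End Adjoint.

Section Sesquilinear.
Variable C : numClosedFieldType.

Definition sesq m n (x : 'cV[C]_m) (A : 'M[C]_(m, n)) (y : 'cV[C]_n) : C :=
  (adjmx x *m A *m y) 0 0.

Lemma sesqE m n (x : 'cV[C]_m) (A : 'M[C]_(m, n)) y :
  sesq x A y = \sum_i \sum_j (x i 0)^* * A i j * y j 0.
Proof.
rewrite /sesq mxE exchange_big; apply: eq_bigr => j _.
by rewrite mxE mulr_suml; apply: eq_bigr => i _; rewrite adjmxE.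
Qed.

Lemma sesq_mulmxl m n p (x : 'cV[C]_m) (A : 'M[C]_(m, n)) (B : 'M[C]_(n, p)) y :
  sesq x (A *m B) y = sesq (adjmx A *m x) B y.
Proof. by rewrite /sesq adjmxM adjmxK !mulmxA. Qed.

Lemma sesq_mulmxr m n p (x : 'cV[C]_m) (A : 'M[C]_(m, n)) (B : 'M[C]_(n, p)) y :
  sesq x (A *m B) y = sesq x A (B *m y).
Proof. by rewrite /sesq !mulmxA. Qed.

Lemma sesqDl m n (x1 x2 : 'cV[C]_m) (A : 'M[C]_(m, n)) y :
  sesq (x1 + x2) A y = sesq x1 A y + sesq x2 A y.
Proof. by rewrite /sesq adjmxD !mulmxDl mxE. Qed.

Lemma sesqDr m n (x : 'cV[C]_m) (A : 'M[C]_(m, n)) y1 y2 :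
  sesq x A (y1 + y2) = sesq x A y1 + sesq x A y2.
Proof. by rewrite /sesq !mulmxDr mxE. Qed.

Lemma sesqZl m n c (x : 'cV[C]_m) (A : 'M[C]_(m, n)) y :
  sesq (c *: x) A y = c^* * sesq x A y.
Proof. by rewrite /sesq adjmxZ -!scalemxAl mxE. Qed.

Lemma sesqZr m n c (x : 'cV[C]_m) (A : 'M[C]_(m, n)) y :
  sesq x A (c *: y) = c * sesq x A y.
Proof. by rewrite /sesq -!scalemxAr mxE. Qed.

Lemma sesqZ m n c (x : 'cV[C]_m) (A : 'M[C]_(m, n)) y :
  sesq x (c *: A) y = c * sesq x A y.
Proof. by rewrite /sesq -scalemxAr -scalemxAl mxE. Qed.

Lemma sesq_suml m n (I : finType) (x : I -> 'cV[C]_m) (A : 'M[C]_(m, n)) y :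
  sesq (\sum_i x i) A y = \sum_i sesq (x i) A y.
Proof. by rewrite /sesq adjmx_sum !mulmx_suml summxE. Qed.

Lemma sesq_sumr m n (I : finType) x (A : 'M[C]_(m, n)) (y : I -> 'cV[C]_n) :
  sesq x A (\sum_i y i) = \sum_i sesq x A (y i).
Proof. by rewrite /sesq mulmx_sumr summxE. Qed.

Lemma sesq_sum m n (I : finType) x (A : I -> 'M[C]_(m, n)) y :
  sesq x (\sum_i A i) y = \sum_i sesq x (A i) y.
Proof. by rewrite /sesq mulmx_sumr mulmx_suml summxE. Qed.

Lemma sesq_rank1 n (v x : 'cV[C]_n) :
  sesq v (x *m adjmx x) v = (adjmx v *m x) 0 0 * ((adjmx v *m x) 0 0)^*.
Proof.
rewrite /sesq mulmxA -mulmxA.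
have -> : adjmx x *m v = adjmx (adjmx v *m x) by rewrite adjmxM adjmxK.
by rewrite mxE big_ord1 adjmxE.
Qed.

Lemma psd_sesq_nullD n (G : 'M[C]_n) v w : psdmx G ->
  sesq v G v = 0 -> sesq w G w = 0 -> sesq (v + w) G (v + w) = 0.
Proof.
move=> psdG vv0 ww0.
have sum_cross : sesq (v + w) G (v + w) = sesq v G w + sesq w G v.
  by rewrite !sesqDl !sesqDr vv0 ww0 add0r addr0.
have diff_cross : sesq (v + (-1) *: w) G (v + (-1) *: w) = - (sesq v G w + sesq w G v).
  by rewrite !sesqDl !sesqDr !sesqZl !sesqZr vv0 ww0 rmorphN1; ring.
apply/eqP; rewrite eq_le -oppr_ge0 psdG andbT sum_cross -diff_cross.
exact: psdG.
Qed.

Lemma sesq_nullZ n c (x : 'cV[C]_n) (A : 'M[C]_n) :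
  sesq x A x = 0 -> sesq (c *: x) A (c *: x) = 0.
Proof. by rewrite sesqZl sesqZr => ->; rewrite !mulr0. Qed.

End Sesquilinear.

Section Blocks.
Variable C : numClosedFieldType.

Definition blockcv k n (v : 'cV[C]_(k * n)) (i : 'I_k) : 'cV[C]_n :=
  \col_a v (mxtens_index (i, a)) 0.

Definition stackcv n k (W : 'M[C]_(n, k)) : 'cV[C]_(k * n) :=
  \col_r W (mxtens_unindex r).2 (mxtens_unindex r).1.

Lemma blockcv_stackcv n k (W : 'M[C]_(n, k)) i : blockcv (stackcv W) i = col i W.
Proof. by apply/matrixP => a b; rewrite !mxE mxtens_indexK. Qed.

Lemma stackcvD n k (V W : 'M[C]_(n, k)) : stackcv (V + W) = stackcv V + stackcv W.
Proof. by apply/matrixP => r s; rewrite !mxE. Qed.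

Lemma stackcvZ n k c (W : 'M[C]_(n, k)) : stackcv (c *: W) = c *: stackcv W.
Proof. by apply/matrixP => r s; rewrite !mxE. Qed.

Lemma big_mxtens_index k n (F : 'I_(k * n) -> C) :
  \sum_r F r = \sum_i \sum_a F (mxtens_index (i, a)).
Proof.
rewrite pair_big /= (reindex (@mxtens_index k n)) /=; last first.
  by exists (@mxtens_unindex k n) => x _; rewrite (mxtens_indexK, mxtens_unindexK).
by apply: eq_bigr => -[i a].
Qed.

Lemma sesq_blocks k n (v w : 'cV[C]_(k * n)) (X : 'M[C]_(k * n)) :
  sesq v X w = \sum_i \sum_j sesq (blockcv v i) (blockmx X i j) (blockcv w j).
Proof.
rewrite sesqE big_mxtens_index.
under eq_bigr => i _ do under eq_bigr => a _ do rewrite big_mxtens_index.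
apply: eq_bigr => i _; rewrite exchange_big; apply: eq_bigr => j _.
rewrite sesqE; apply: eq_bigr => a _; apply: eq_bigr => b _.
by rewrite !mxE.
Qed.

Lemma blockmx_sum_delta k n (Y : 'I_k -> 'I_k -> 'M[C]_n) i' j' :
  blockmx (\sum_i \sum_j delta_mx i j *t Y i j) i' j' = Y i' j'.
Proof.
apply/matrixP => a b; rewrite mxE summxE (bigD1 i') //= summxE (bigD1 j') //=.
rewrite tensmxE !mxE !eqxx mul1r big1 ?addr0; last first.
  by move=> j /negbTE j'j; rewrite tensmxE mxE eqxx [j' == j]eq_sym j'j mul0r.
rewrite big1 ?addr0 // => i /negbTE i'i; rewrite summxE big1 // => j _.
by rewrite tensmxE mxE [i' == i]eq_sym i'i mul0r.
Qed.

Lemma sesq_stackcv_ampliate n m k (E : 'M[C]_n -> 'M[C]_m) (X : 'M[C]_(k * n))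
    (V W : 'M[C]_(m, k)) :
  sesq (stackcv V) (ampliate E X) (stackcv W) =
  \sum_i \sum_j sesq (col i V) (E (blockmx X i j)) (col j W).
Proof.
rewrite sesq_blocks; apply: eq_bigr => i _; apply: eq_bigr => j _.
by rewrite blockmx_sum_delta !blockcv_stackcv.
Qed.

End Blocks.

Section CompletelyPositive.
Variable C : numClosedFieldType.

Lemma cp_psd n m (E : 'M[C]_n -> 'M[C]_m) (X : 'M[C]_n) :
  completely_positive E -> psdmx X -> psdmx (E X).
Proof.
move=> cpE psdX w.
pose X1 : 'M[C]_(1 * n) := \matrix_(r, s) X (mxtens_unindex r).2 (mxtens_unindex s).2.
have X1_block i j : blockmx X1 i j = X.
  by apply/matrixP => a b; rewrite !mxE !mxtens_indexK.
have psdX1 : psdmx X1.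
  by move=> v; rewrite -/(sesq v X1 v) sesq_blocks !big_ord1 X1_block; apply: psdX.
have := cpE 1%N X1 psdX1 (stackcv (w : 'M_(m, 1))).
by rewrite -/(sesq _ _ _) sesq_stackcv_ampliate !big_ord1 X1_block col_id.
Qed.

Lemma psd_compress_blocks k n m (T : 'I_k -> 'M[C]_(n, m)) (M : 'M[C]_m) :
  psdmx M -> psdmx (\sum_i \sum_j delta_mx i j *t (T i *m M *m adjmx (T j))).
Proof.
move=> psdM v; rewrite -/(sesq v _ v) sesq_blocks.
under eq_bigr => i _ do under eq_bigr => j _ do
  rewrite blockmx_sum_delta sesq_mulmxr sesq_mulmxl.
pose s := \sum_i adjmx (T i) *m blockcv v i.
have -> : \sum_i \sum_j sesq (adjmx (T i) *m blockcv v i) M (adjmx (T j) *m blockcv v j)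
          = sesq s M s.
  by rewrite sesq_suml; apply: eq_bigr => i _; rewrite sesq_sumr.
exact: psdM.
Qed.

End CompletelyPositive.

Definition unimodular (C : numClosedFieldType) n (u : 'rV[C]_n) : Prop :=
  forall k, (u 0 k)^* * u 0 k = 1.

Lemma unimodular_const1 (C : numClosedFieldType) n : unimodular (const_mx 1 : 'rV[C]_n).
Proof. by move=> k; rewrite mxE conjC1 mulr1. Qed.

Lemma exists_neq_ord d (q : 'I_d) : (1 < d)%N -> exists r : 'I_d, r != q.
Proof.
move=> d_gt1; have /card_gt0P [r] : (0 < #|predC1 q|)%N.
  by rewrite cardC1 card_ord -ltnS prednK // ltnW.
by exists r.
Qed.

Lemma oner_neqN1 (C : numDomainType) : (1 : C) != -1.
Proof. by rewrite -subr_eq0 opprK lt0r_neq0 // addr_gt0 ?ltr01. Qed.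

Section RankOneSpan.
Variables (C : numClosedFieldType) (d : nat) (S : 'M[C]_d -> Prop).
Hypothesis S_add : forall V W, S V -> S W -> S (V + W).
Hypothesis S_scale : forall c V, S V -> S (c *: V).
Hypothesis S_rank1 : forall (u : 'rV[C]_d) (y : 'cV[C]_d),
  unimodular u -> \sum_j (y j 0)^* * u 0 j = 0 -> S (y *m u).

Local Notation ecol p := (delta_mx p 0 : 'cV[C]_d).
Local Notation ones := (const_mx 1 : 'rV[C]_d).

Lemma S_lincomb a b V W : S V -> S W -> S (a *: V + b *: W).
Proof. by move=> SV SW; apply: S_add; apply: S_scale. Qed.

Lemma S_unscale c V : c != 0 -> S (c *: V) -> S V.
Proof. by move=> c0 /(S_scale c^-1); rewrite scalerA mulVf // scale1r. Qed.

Lemma S_sum (I : finType) (P : pred I) (F : I -> 'M[C]_d) :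
  (forall i, P i -> S (F i)) -> S (\sum_(i | P i) F i).
Proof.
move=> SF; apply: (big_ind S) => //.
have := @S_rank1 _ 0 (@unimodular_const1 C d).
by rewrite mul0mx; apply; apply: big1 => j _; rewrite mxE conjC0 mul0r.
Qed.

Lemma S_phase p q t : p != q -> t^* * t = 1 -> t != 1 ->
  S (ecol q *m (ones - 'e_p) + t *: (ecol p *m 'e_p)).
Proof.
move=> pq t_unit t1; have qp : (q == p) = false by rewrite eq_sym (negbTE pq).
pose u s : 'rV[C]_d := \row_j (if j == p then s else 1).
pose g s := (s *: ecol p - ecol q) *m u s.
have S_g s : s^* * s = 1 -> S (g s).
  move=> s_unit; apply: S_rank1 => [k|].
    by rewrite mxE; case: (k == p) => //; rewrite conjC1 mulr1.
  rewrite (bigD1 p) //= (bigD1 q) 1?eq_sym //= big1 => [|j /andP [jp jq]].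
    rewrite !mxE !eqxx (negbTE pq) qp /= mulr1 mulr0 subr0 sub0r addr0.
    by rewrite mulr1 rmorphN1 s_unit subrr.
  by rewrite !mxE (negbTE jp) (negbTE jq) /= mulr0 subr0 conjC0 mul0r.
apply: (@S_unscale (t - 1)); first by rewrite subr_eq0.
have -> : (t - 1) *: (ecol q *m (ones - 'e_p) + t *: (ecol p *m 'e_p)) =
    1 *: g t + (- t) *: g 1.
  apply/matrixP => b c; rewrite !mxE !big_ord1 !mxE ?andbT.
  have [->|bp] := eqVneq b p.
    by rewrite ?eqxx ?qp ?(negbTE pq) /=; case: (c == p) => /=; ring.
  by case: (b == q); case: (c == p); rewrite /=; ring.
by apply: S_lincomb; apply: S_g; rewrite // conjC1 mulr1.
Qed.

Lemma S_diag_unit p q : p != q -> S (ecol p *m 'e_p).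
Proof.
move=> pq; have i_sqr := sqrCi C.
have i_unit : 'i^* * 'i = 1 :> C by rewrite conjCi mulNr -expr2 i_sqr opprK.
have iN1 : 'i != -1 :> C.
  by apply: contra_neq (oner_neqN1 C) => iE; rewrite -i_sqr iE sqrrN expr1n.
have i1 : 'i != 1 :> C.
  by apply: contra_neq (oner_neqN1 C) => iE; rewrite -i_sqr iE expr1n.
apply: (@S_unscale (-1 - 'i)); first by rewrite subr_eq0 eq_sym.
have -> : (-1 - 'i) *: (ecol p *m 'e_p) =
    1 *: (ecol q *m (ones - 'e_p) + (-1) *: (ecol p *m 'e_p))
    + (-1) *: (ecol q *m (ones - 'e_p) + 'i *: (ecol p *m 'e_p)).
  by apply/matrixP => b c; rewrite !mxE !big_ord1 !mxE; ring.
apply: S_lincomb; apply: S_phase => //; last by rewrite eq_sym oner_neqN1.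
by rewrite rmorphN1 mulrNN mulr1.
Qed.

Lemma S_row_compl p q : p != q -> S (ecol q *m (ones - 'e_p)).
Proof.
move=> pq.
have -> : ecol q *m (ones - 'e_p) =
    (ecol q *m (ones - 'e_p) + (-1) *: (ecol p *m 'e_p)) + ecol p *m 'e_p.
  by rewrite scaleN1r addrNK.
apply: S_add; last exact: S_diag_unit pq.
apply: S_phase; rewrite ?rmorphN1 ?mulrNN ?mulr1 //.
by rewrite eq_sym oner_neqN1.
Qed.

Lemma S_row q : (2 < d)%N -> S (ecol q *m ones).
Proof.
move=> d_gt2; have [r rq] := exists_neq_ord q (ltnW d_gt2).
apply: (@S_unscale (d - 2)%:R); first by rewrite pnatr_eq0 subn_eq0 -ltnNge.
have sum_e : \sum_r 'e_r = ones.
  by rewrite [ones]row_sum_delta; apply: eq_bigr => k _; rewrite mxE scale1r.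
have sum_compl : \sum_(k | k != q) (ones - 'e_k) = ones *+ d - ones - (ones - 'e_q).
  have total : \sum_k (ones - 'e_k) = ones *+ d - ones.
    by rewrite sumrB sum_e sumr_const card_ord.
  by rewrite (bigD1 q) //= in total; rewrite -total addrC addrK.
(* Summing over k <> q gives (d - 2) copies of the whole row: this is where d >= 3 is used. *)
have -> : (d - 2)%:R *: (ecol q *m ones) =
    \sum_(k | k != q) ecol q *m (ones - 'e_k) + (-1) *: (ecol q *m 'e_q).
  rewrite scaleN1r -mulmxN -mulmx_sumr -mulmxDr scalemxAr sum_compl.
  congr (_ *m _); rewrite scaler_nat (mulrnBr _ (ltnW d_gt2)) mulr2n.
  by move: (ones *+ d) ('e_q) => X Y; apply/rowP => j; rewrite !mxE; ring.
apply: S_add; last by apply: S_scale; apply: (@S_diag_unit q r); rewrite eq_sym.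
by apply: S_sum => k kq; apply: S_row_compl.
Qed.

Lemma S_all_ones : (2 < d)%N -> S ((const_mx 1 : 'cV[C]_d) *m ones).
Proof.
move=> d_gt2; have -> : (const_mx 1 : 'cV[C]_d) = \sum_q ecol q.
  apply/colP => i; rewrite summxE (bigD1 i) //= big1 => [|k ki]; rewrite !mxE ?eqxx ?addr0 //.
  by rewrite eq_sym (negbTE ki).
by rewrite mulmx_suml; apply: S_sum => q _; apply: S_row.
Qed.

End RankOneSpan.

Section Unimodular.
Variables (C : numClosedFieldType) (n : nat) (u : 'rV[C]_n).
Hypothesis u_unimod : unimodular u.

Lemma unimodular_conj : unimodular (map_mx Num.conj u).
Proof. by move=> k; rewrite !mxE conjCK mulrC. Qed.

Lemma adjmx_diag_mulmx : adjmx (diag_mx u) *m diag_mx u = 1%:M.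
Proof.
by apply/matrixP => i j; rewrite adjmx_diag mul_diag_mx !mxE mulrnAr u_unimod.
Qed.

Lemma diag_unitarymx : diag_mx u \is unitarymx.
Proof.
apply/unitarymxP; rewrite -adjmx_trC adjmx_diag.
by apply/matrixP => i j; rewrite mul_diag_mx !mxE mulrnAr mulrC u_unimod.
Qed.

End Unimodular.

Lemma tensmxZl (C : numClosedFieldType) m n p q c (A : 'M[C]_(m, n)) (B : 'M[C]_(p, q)) :
  (c *: A) *t B = c *: (A *t B).
Proof. by apply/matrixP => r s; rewrite !mxE mulrA. Qed.

Lemma tensmx_suml (C : numClosedFieldType) m n p q (I : finType)
    (F : I -> 'M[C]_(m, n)) (B : 'M[C]_(p, q)) :
  (\sum_i F i) *t B = \sum_i (F i *t B).
Proof.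
apply/matrixP => r s; rewrite summxE !mxE summxE mulr_suml.
by apply: eq_bigr => i _; rewrite !mxE.
Qed.

Lemma col_mul_rank1 (C : numClosedFieldType) n (y : 'cV[C]_n) (u : 'rV[C]_n) k :
  col k (y *m u) = u 0 k *: y.
Proof. by apply/matrixP => i j; rewrite !mxE big_ord1 (ord1 j) mulrC. Qed.

Section DiagonalTwirl.
Variables (C : numClosedFieldType) (d a : nat).
Variables (D : 'M[C]_(d * a) -> 'M[C]_d) (M : 'M[C]_(d * a)).
Hypotheses (linD : linear D) (cpD : completely_positive D) (psdM : psdmx M).
HB.instance Definition _ := GRing.isLinear.Build C _ _ _ D linD.

Local Notation P k := (delta_mx k k *t (1%:M : 'M[C]_a)).
Local Notation twirl U :=
  (D ((U *t (1%:M : 'M[C]_a)) *m M *m adjmx (U *t (1%:M : 'M[C]_a)))).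

Let G := ampliate D (\sum_k \sum_l delta_mx k l *t (P k *m M *m adjmx (P l))).

Lemma sesq_diag_twirl (u : 'rV[C]_d) y :
  sesq y (twirl (diag_mx (map_mx Num.conj u))) y =
  sesq (stackcv (y *m u)) G (stackcv (y *m u)).
Proof.
have -> : diag_mx (map_mx Num.conj u) *t (1%:M : 'M[C]_a) = \sum_k (u 0 k)^* *: P k.
  rewrite diag_mx_sum_delta tensmx_suml; apply: eq_bigr => k _.
  by rewrite tensmxZl mxE.
rewrite sesq_stackcv_ampliate adjmx_sum !mulmx_suml (raddf_sum D) /= sesq_sum.
apply: eq_bigr => k _; rewrite mulmx_sumr (raddf_sum D) /= sesq_sum; apply: eq_bigr => l _.
rewrite blockmx_sum_delta adjmxZ conjCK -!scalemxAl -scalemxAr scalerA linearZ_LR.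
by rewrite sesqZ !col_mul_rank1 sesqZl sesqZr mulrA.
Qed.

Lemma diag_twirl_null_ones : (2 < d)%N ->
  (forall (u : 'rV[C]_d) (y : 'cV[C]_d), unimodular u ->
     \sum_j (y j 0)^* * u 0 j = 0 ->
     sesq y (twirl (diag_mx (map_mx Num.conj u))) y = 0) ->
  sesq (const_mx 1) (twirl (diag_mx (map_mx Num.conj (const_mx 1)))) (const_mx 1) = 0.
Proof.
move=> d_gt2 null_orth; rewrite sesq_diag_twirl.
have psdG : psdmx G by apply: cpD; exact: psd_compress_blocks.
apply: (@S_all_ones _ _ (fun W => sesq (stackcv W) G (stackcv W) = 0)) => //.
- by move=> V W; rewrite stackcvD; apply: psd_sesq_nullD.
- by move=> c V; rewrite stackcvZ; apply: sesq_nullZ.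
- by move=> u y u_unimod y_orth; rewrite -sesq_diag_twirl; apply: null_orth.
Qed.

End DiagonalTwirl.

Section UniformState.
Variables (C : numClosedFieldType) (n : nat).
Local Notation ones := (const_mx 1 : 'cV[C]_n).
Local Notation rho := (n%:R^-1 *: (ones *m adjmx ones)).

Lemma density_uniform : (0 < n)%N -> density rho.
Proof.
move=> n_gt0; have n0 : n%:R != 0 :> C by rewrite pnatr_eq0 -lt0n.
split=> [v|].
  rewrite -/(sesq v _ v) sesqZ sesq_rank1; apply: mulr_ge0.
    by rewrite invr_ge0 ler0n.
  exact: mul_conjC_ge0.
rewrite mxtraceZ mxtrace_mulC /mxtrace big_ord1 mxE.
under eq_bigr do rewrite adjmxE !mxE conjC1 mulr1.
by rewrite sumr_const card_ord mulVf.
Qed.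

Lemma sesq_diag_uniform c (u : 'rV[C]_n) (y : 'cV[C]_n) :
  let s := \sum_j (y j 0)^* * u 0 j in
  sesq y (c *: (diag_mx u *m rho *m adjmx (diag_mx u))) y = c / n%:R * (s * s^*).
Proof.
rewrite /= sesqZ -scalemxAr -scalemxAl sesqZ mulrA; congr (_ * _).
rewrite !mulmxA -[_ *m adjmx (diag_mx u)]mulmxA -adjmxM sesq_rank1.
suff -> : (adjmx y *m (diag_mx u *m ones)) 0 0 = \sum_j (y j 0)^* * u 0 j by [].
by rewrite mul_diag_mx mxE; apply: eq_bigr => j _; rewrite adjmxE !mxE mulr1.
Qed.

End UniformState.

Lemma entryconj_diag_conj (C : numClosedFieldType) n (u : 'rV[C]_n) :
  entryconj (diag_mx (map_mx Num.conj u)) = diag_mx u.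
Proof.
rewrite /entryconj map_diag_mx; congr diag_mx.
by apply/matrixP => i j; rewrite !mxE /= conjCK.
Qed.

Section NoConjugatingProtocol.
Variables (C : numClosedFieldType) (d a : nat) (eps : C).
Variables (E : 'M[C]_d -> 'M[C]_(d * a)) (D : 'M[C]_(d * a) -> 'M[C]_d).
Hypotheses (eps_gt0 : 0 < eps) (cpE : completely_positive E).
Hypotheses (linD : linear D) (cpD : completely_positive D).
Hypothesis conjugating : forall (U rho : 'M[C]_d), U \is unitarymx -> density rho ->
  let out := D ((U *t (1%:M : 'M[C]_a)) *m E rho *m adjmx (U *t (1%:M : 'M[C]_a))) in
  (eps <= \tr out) /\
  exists c : C, out = c *: (entryconj U *m rho *m adjmx (entryconj U)).
Hypothesis d_gt2 : (2 < d)%N.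

Local Notation ones := (const_mx 1 : 'cV[C]_d).
Local Notation rho := (d%:R^-1 *: (ones *m adjmx ones)).
Local Notation out U :=
  (D ((U *t (1%:M : 'M[C]_a)) *m E rho *m adjmx (U *t (1%:M : 'M[C]_a)))).

Let rho_density : density rho.
Proof. by apply: density_uniform; apply: ltnW (ltnW d_gt2). Qed.

Lemma sesq_diag_output (u : 'rV[C]_d) : unimodular u ->
  exists2 c, eps <= c & forall y : 'cV[C]_d,
    let s := \sum_j (y j 0)^* * u 0 j in
    sesq y (out (diag_mx (map_mx Num.conj u))) y = c / d%:R * (s * s^*).
Proof.
move=> u_unimod; have U_unitary := diag_unitarymx (unimodular_conj u_unimod).
have /= [le_tr [c out_eq]] := conjugating U_unitary rho_density.
rewrite out_eq entryconj_diag_conj in le_tr *.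
exists c => [|y]; last exact: sesq_diag_uniform.
move: le_tr; rewrite mxtraceZ mxtrace_mulC mulmxA adjmx_diag_mulmx // mul1mx.
by rewrite rho_density.2 mulr1.
Qed.

Theorem no_conjugating_protocol : False.
Proof.
have d0 : d%:R != 0 :> C by rewrite pnatr_eq0 -lt0n (ltnW (ltnW d_gt2)).
have null_orth (u : 'rV[C]_d) (y : 'cV[C]_d) : unimodular u ->
    \sum_j (y j 0)^* * u 0 j = 0 -> sesq y (out (diag_mx (map_mx Num.conj u))) y = 0.
  by move=> /sesq_diag_output [c _ ->] /= ->; rewrite mul0r mulr0.
have := diag_twirl_null_ones linD cpD (cp_psd cpE rho_density.1) d_gt2 null_orth.
have [c c_ge -> /eqP] := sesq_diag_output (@unimodular_const1 C d).
under eq_bigr do rewrite !mxE conjC1 mulr1.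
rewrite sumr_const card_ord conjC_nat -mulrA mulKf //; apply/negP.
by rewrite mulf_neq0 // gt_eqF // (lt_le_trans eps_gt0 c_ge).
Qed.

End NoConjugatingProtocol.

Theorem theorem2 (R : realType) (d : nat) : (3 <= d)%N ->
  ~ exists (eps : R) (a : nat)
      (E : 'M[R[i]]_d -> 'M[R[i]]_(d * a))
      (D : 'M[R[i]]_(d * a) -> 'M[R[i]]_d),
    [/\ 0 < eps, cptni E, cptni D &
      forall (U rho : 'M[R[i]]_d), U \is unitarymx -> density rho ->
        let out := D ((U *t (1%:M : 'M[R[i]]_a)) *m E rho
                        *m adjmx (U *t (1%:M : 'M[R[i]]_a))) in
        ((eps%:C)%C <= \tr out) /\
        exists c : R[i], out = c *: (entryconj U *m rho *m adjmx (entryconj U))].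
Proof.
move=> d_gt2 [eps [a [E [D [eps_gt0 [_ cpE _] [linD cpD _] conjugating]]]]].
apply: (no_conjugating_protocol _ cpE linD cpD conjugating d_gt2).
by rewrite -(ltcR 0 eps) in eps_gt0.
Qed.
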